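(* Let $\mathcal{I}\in\mathrm{Ins}(\Omega,\mathcal{H},\mathcal{K})$ be an instrument and $\mathsf{B}\in\mathcal{O}(\Lambda,\mathcal{H})$ a POVM. Then for any measure-and-prepare instrument $\mathcal{J}^{\mathsf{B}}$ that measures $\mathsf{B}$, $\mathcal{I}$ is compatible with $\mathsf{B}$ if and only if $\mathcal{I}$ is compatible with $\mathcal{J}^{\mathsf{B}}$.
   Context: All Hilbert spaces are finite-dimensional and complex, and all outcome sets are finite. A POVM $\mathsf{B}\in\mathcal{O}(\Lambda,\mathcal{H})$ is a map $y\mapsto\mathsf{B}(y)$ to positive operators with $\sum_y\mathsf{B}(y)=I$. An instrument $\mathcal{I}\in\mathrm{Ins}(\Omega,\mathcal{H},\mathcal{K})$ is a family $(\mathcal{I}_x)_{x\in\Omega}$ of completely positive trace-nonincreasing linear maps $\mathcal{L}(\mathcal{H})\to\mathcal{L}(\mathcal{K})$ whose sum is trace preserving; its induced POVM $\mathsf{A}^{\mathcal{I}}$ is given by $\mathrm{tr}[\mathsf{A}^{\mathcal{I}}(x)\varrho]=\mathrm{tr}[\mathcal{I}_x(\varrho)]$. A measure-and-prepare instrument measuring $\mathsf{B}$ is an instrument $\mathcal{J}^{\mathsf{B}}\in\mathrm{Ins}(\Lambda,\mathcal{H},\mathcal{V})$ (for some Hilbert space $\mathcal{V}$) of the form $\mathcal{J}^{\mathsf{B}}_y(\varrho)=\mathrm{tr}[\mathsf{B}(y)\varrho]\xi_y$ for some states $\{\xi_y\}_{y\in\Lambda}$ on $\mathcal{V}$. Two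 instruments $\mathcal{I}\in\mathrm{Ins}(\Omega,\mathcal{H},\mathcal{K})$, $\mathcal{J}\in\mathrm{Ins}(\Lambda,\mathcal{H},\mathcal{V})$ are compatible if there is $\mathcal{G}\in\mathrm{Ins}(\Omega\times\Lambda,\mathcal{H},\mathcal{K}\otimes\mathcal{V})$ with $\sum_{x}\mathrm{tr}_{\mathcal{K}}[\mathcal{G}_{(x,y)}(\varrho)]=\mathcal{J}_y(\varrho)$ for all $y$ and $\sum_y\mathrm{tr}_{\mathcal{V}}[\mathcal{G}_{(x,y)}(\varrho)]=\mathcal{I}_x(\varrho)$ for all $x$, for all states $\varrho$. An instrument $\mathcal{I}\in\mathrm{Ins}(\Omega,\mathcal{H},\mathcal{K})$ and a POVM $\mathsf{B}\in\mathcal{O}(\Lambda,\mathcal{H})$ are compatible if there is $\mathcal{R}\in\mathrm{Ins}(\Omega\times\Lambda,\mathcal{H},\mathcal{K})$ with $\sum_y\mathcal{R}_{(x,y)}=\mathcal{I}_x$ for all $x$ and $\sum_x\mathsf{A}^{\mathcal{R}}(x,y)=\mathsf{B}(y)$ for all $y$. *)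

(* Finite-dimensional complex Hilbert spaces are modelled as
   C^n with C an arbitrary numClosedFieldType (e.g. the complex numbers);
   operators on C^n are square matrices 'M[C]_n, and C^k (x) C^v is C^(k*v)
   with the index pairing of mathcomp's mxvec_index. *)
From HB Require Import structures.
From mathcomp Require Import all_boot all_order all_algebra.
Set Implicit Arguments. Unset Strict Implicit. Unset Printing Implicit Defensive.
Import Order.TTheory GRing.Theory Num.Theory.
Local Open Scope ring_scope.

Section Quantum.
Variable C : numClosedFieldType.

Definition adjmx m n (A : 'M[C]_(m, n)) : 'M[C]_(n, m) := (map_mx Num.conj A)^T.

Definition psd n (A : 'M[C]_n) : Prop :=
  forall x : 'cV[C]_n, 0 <= (adjmx x *m A *m x) 0 0.

Definition is_state n (rho : 'M[C]_n) : Prop := psd rho /\ \tr rho = 1.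

(* inverse of the index pairing 'I_m * 'I_n -> 'I_(m*n) *)
Definition tidx m n (p : 'I_(m * n)) : 'I_m * 'I_n :=
  enum_val (cast_ord (esym (mxvec_cast m n)) p).

Definition ptrace_fst k v (X : 'M[C]_(k * v)) : 'M[C]_v :=
  \matrix_(c, d) \sum_(a < k) X (mxvec_index a c) (mxvec_index a d).
Definition ptrace_snd k v (X : 'M[C]_(k * v)) : 'M[C]_k :=
  \matrix_(a, b) \sum_(c < v) X (mxvec_index a c) (mxvec_index b c).

(* the map id_m (x) Phi : L(C^m (x) C^n) -> L(C^m (x) C^k) *)
Definition ampl m n k (Phi : 'M[C]_n -> 'M[C]_k) (X : 'M[C]_(m * n))
  : 'M[C]_(m * k) :=
  \matrix_(p, q)
    Phi (\matrix_(i, j) X (mxvec_index (tidx p).1 i) (mxvec_index (tidx q).1 j))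
        (tidx p).2 (tidx q).2.

Definition lin_map n k (Phi : 'M[C]_n -> 'M[C]_k) : Prop :=
  forall (a : C) (X Y : 'M[C]_n), Phi (a *: X + Y) = a *: Phi X + Phi Y.

Definition completely_positive n k (Phi : 'M[C]_n -> 'M[C]_k) : Prop :=
  forall (m : nat) (X : 'M[C]_(m * n)), psd X -> psd (ampl Phi X).

Definition trace_nonincreasing n k (Phi : 'M[C]_n -> 'M[C]_k) : Prop :=
  forall X : 'M[C]_n, psd X -> \tr (Phi X) <= \tr X.

Definition is_povm (L : finType) n (B : L -> 'M[C]_n) : Prop :=
  (forall y, psd (B y)) /\ \sum_(y : L) B y = 1%:M.

Definition is_instrument (O : finType) n k (I : O -> 'M[C]_n -> 'M[C]_k) : Prop :=
  (forall x, lin_map (I x) /\ completely_positive (I x)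
             /\ trace_nonincreasing (I x)) /\
  (forall X : 'M[C]_n, \tr (\sum_(x : O) I x X) = \tr X).

(* induced POVM: the unique A(x) with tr[A(x) X] = tr[I_x(X)] for all X
   (A(x)_{ij} = tr[I_x(E_{ji})]) *)
Definition induced_povm (O : finType) n k (I : O -> 'M[C]_n -> 'M[C]_k) (x : O)
  : 'M[C]_n := \matrix_(i, j) \tr (I x (delta_mx j i)).

Definition mp_instrument (L : finType) n v (B : L -> 'M[C]_n) (xi : L -> 'M[C]_v)
  (y : L) (rho : 'M[C]_n) : 'M[C]_v := \tr (B y *m rho) *: xi y.

Definition compatible_instruments (O L : finType) n k v
  (I : O -> 'M[C]_n -> 'M[C]_k) (J : L -> 'M[C]_n -> 'M[C]_v) : Prop :=
  exists G : (O * L)%type -> 'M[C]_n -> 'M[C]_(k * v),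
    is_instrument G /\
    forall rho : 'M[C]_n, is_state rho ->
      (forall y, \sum_(x : O) ptrace_fst (G (x, y) rho) = J y rho) /\
      (forall x, \sum_(y : L) ptrace_snd (G (x, y) rho) = I x rho).

Definition compatible_instrument_povm (O L : finType) n k
  (I : O -> 'M[C]_n -> 'M[C]_k) (B : L -> 'M[C]_n) : Prop :=
  exists R : (O * L)%type -> 'M[C]_n -> 'M[C]_k,
    is_instrument R /\
    (forall x (X : 'M[C]_n), \sum_(y : L) R (x, y) X = I x X) /\
    (forall y, \sum_(x : O) induced_povm R (x, y) = B y).

End Quantum.

(* If R is a joint instrument for I and B, then
   G_(x,y)(rho) := R_(x,y)(rho) (x) xi_y is a joint instrument for I and J^B;
   the complete positivity of G comes down to the Schur product theorem (the
   entrywise product of positive semidefinite matrices is positive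
   semidefinite), proved through the spectral decomposition.  Conversely, if G
   is a joint instrument for I and J^B, then R_(x,y) := tr_V o G_(x,y) is a
   joint instrument for I and B: its marginals agree with I and with B on
   states, hence everywhere, because the states span all matrices. *)

From HB Require Import structures.
From mathcomp Require Import all_boot all_order all_algebra.
From mathcomp Require Import ring.
Set Implicit Arguments. Unset Strict Implicit. Unset Printing Implicit Defensive.
Import Order.TTheory GRing.Theory Num.Theory.
Local Open Scope ring_scope.
Local Open Scope sesquilinear_scope.

Section Quantum.
Variable C : numClosedFieldType.

Lemma tidx_mxvec m n (a : 'I_m) (b : 'I_n) : tidx (mxvec_index a b) = (a, b).
Proof. by rewrite /tidx /mxvec_index cast_ordK enum_rankK. Qed.

Lemma mxvec_tidx m n (p : 'I_(m * n)) : mxvec_index (tidx p).1 (tidx p).2 = p.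
Proof. by case/mxvec_indexP: p => a b; rewrite tidx_mxvec. Qed.

Lemma sum_mxvec_index (V : nmodType) m n (F : 'I_(m * n) -> V) :
  \sum_p F p = \sum_a \sum_b F (mxvec_index a b).
Proof.
rewrite pair_big (reindex (fun ab : 'I_m * 'I_n => mxvec_index ab.1 ab.2)) //=.
by exists (@tidx m n) => [[a b] _|p _]; rewrite ?tidx_mxvec ?mxvec_tidx.
Qed.

Lemma adjmxD m1 m2 (A B : 'M[C]_(m1, m2)) : adjmx (A + B) = adjmx A + adjmx B.
Proof. by apply/matrixP => i j; rewrite !mxE rmorphD. Qed.

Lemma adjmxZ m1 m2 c (A : 'M[C]_(m1, m2)) : adjmx (c *: A) = c^* *: adjmx A.
Proof. by apply/matrixP => i j; rewrite !mxE rmorphM. Qed.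

Lemma adjmx_delta m1 m2 (i : 'I_m1) (j : 'I_m2) :
  adjmx (delta_mx i j : 'M[C]_(m1, m2)) = delta_mx j i.
Proof. by apply/matrixP => a b; rewrite !mxE rmorph_nat andbC. Qed.

Lemma adjmxE m1 m2 (A : 'M[C]_(m1, m2)) : adjmx A = A ^t*.
Proof. by rewrite /adjmx map_trmx. Qed.

Lemma adjmxK m1 m2 (A : 'M[C]_(m1, m2)) : adjmx (adjmx A) = A.
Proof. by rewrite !adjmxE trmxCK. Qed.

Lemma adjmxM m1 m2 m3 (A : 'M[C]_(m1, m2)) (B : 'M[C]_(m2, m3)) :
  adjmx (A *m B) = adjmx B *m adjmx A.
Proof. by rewrite /adjmx map_mxM trmx_mul. Qed.

Definition mxform n (A : 'M[C]_n) (x y : 'cV[C]_n) : C := (adjmx x *m A *m y) 0 0.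

Lemma mxformDl n (A : 'M[C]_n) x1 x2 y :
  mxform A (x1 + x2) y = mxform A x1 y + mxform A x2 y.
Proof. by rewrite /mxform adjmxD !mulmxDl mxE. Qed.

Lemma mxformDr n (A : 'M[C]_n) x y1 y2 :
  mxform A x (y1 + y2) = mxform A x y1 + mxform A x y2.
Proof. by rewrite /mxform mulmxDr mxE. Qed.

Lemma mxformZl n (A : 'M[C]_n) c x y : mxform A (c *: x) y = c^* * mxform A x y.
Proof. by rewrite /mxform adjmxZ -!scalemxAl mxE. Qed.

Lemma mxformZr n (A : 'M[C]_n) c x y : mxform A x (c *: y) = c * mxform A x y.
Proof. by rewrite /mxform -scalemxAr mxE. Qed.

Lemma mxform_delta n (A : 'M[C]_n) i j :
  mxform A (delta_mx i 0) (delta_mx j 0) = A i j.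
Proof. by rewrite /mxform adjmx_delta -rowE -colE !mxE. Qed.

Lemma psd_mxform_conj n (A : 'M[C]_n) : psd A ->
  forall x y, mxform A y x = (mxform A x y)^*.
Proof.
move=> psdA x y.
have real z : (mxform A z z)^* = mxform A z z by exact/geC0_conj/psdA.
have sym_real z w : (mxform A z w + mxform A w z)^* = mxform A z w + mxform A w z.
  have -> : mxform A z w + mxform A w z =
            mxform A (z + w) (z + w) - mxform A z z - mxform A w w.
    by rewrite !(mxformDl, mxformDr); ring.
  by rewrite !rmorphB /= !real.
have := sym_real x ('i *: y); have := sym_real x y.
rewrite mxformZl mxformZr conjCi.
move: (mxform A x y) (mxform A y x) => a b h1 h2.
(* [a + b] and [i (a - b)] are real, and [2 b = (a + b) + i (i (a - b))]. *)
have ii : 'i * 'i = -1 :> C by rewrite -expr2 sqrCi.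
have two : (2%:R : C) != 0 by rewrite pnatr_eq0.
apply: (mulfI two).
transitivity ((a + b) + 'i * ('i * a + - 'i * b)); first ring: ii.
rewrite -h1 -h2 !rmorphD !rmorphM !rmorphN /= conjCi; ring: ii.
Qed.

Lemma psd_hermitian n (A : 'M[C]_n) : psd A -> adjmx A = A.
Proof.
move=> psdA; apply/matrixP => i j.
by rewrite !mxE -!mxform_delta (psd_mxform_conj psdA) conjCK.
Qed.

Lemma psd_congr m n (S : 'M[C]_(n, m)) (A : 'M[C]_n) :
  psd A -> psd (adjmx S *m A *m S).
Proof. by move=> psdA x; have := psdA (S *m x); rewrite adjmxM !mulmxA. Qed.

Lemma psd_sum (I : finType) n (F : I -> 'M[C]_n) :
  (forall i, psd (F i)) -> psd (\sum_i F i).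
Proof.
move=> psdF x; rewrite mulmx_sumr mulmx_suml summxE.
by apply: sumr_ge0 => i _; exact: psdF.
Qed.

Lemma psd_scale n c (A : 'M[C]_n) : 0 <= c -> psd A -> psd (c *: A).
Proof.
by move=> c_ge0 psdA x; rewrite -scalemxAr -scalemxAl mxE mulr_ge0.
Qed.

Lemma psd1 n : psd (1%:M : 'M[C]_n).
Proof.
move=> x; rewrite mulmx1 mxE; apply: sumr_ge0 => i _.
by rewrite !mxE mulrC mul_conjC_ge0.
Qed.

Lemma psd_outer m n (w : 'M[C]_(n, m)) : psd (w *m adjmx w).
Proof.
by have := psd_congr (adjmx w) (@psd1 m); rewrite adjmxK mulmx1.
Qed.

Lemma psd_mxsub m n (f : 'I_m -> 'I_n) (A : 'M[C]_n) : psd A -> psd (mxsub f f A).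
Proof.
have -> : mxsub f f A = adjmx (colsub f 1%:M) *m A *m colsub f 1%:M.
  have -> : adjmx (colsub f 1%:M) = rowsub f (1%:M : 'M[C]_n).
    by apply/matrixP => i j; rewrite !mxE rmorph_nat eq_sym.
  by rewrite mul_rowsub_mx -mxsub_mul mul1mx mulmx1.
exact: psd_congr.
Qed.

Lemma psd_spectral n (A : 'M[C]_n) : psd A ->
  exists (u : 'I_n -> 'cV[C]_n) (d : 'I_n -> C),
    (forall j, 0 <= d j) /\ A = \sum_j d j *: (u j *m adjmx (u j)).
Proof.
move=> psdA.
have /hermitian_normalmx /orthomx_spectralP A_spectral : A \is hermsymmx.
  by apply/is_hermitianmxP; rewrite expr0 scale1r -adjmxE psd_hermitian.
set P := spectralmx A in A_spectral; set d := spectral_diag A in A_spectral.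
have P_unitary : P \is unitarymx := spectral_unitarymx A.
rewrite invmx_unitary // -adjmxE in A_spectral.
exists (fun j => adjmx (row j P)), (fun j => d 0 j); split.
  move=> j; have := psdA (adjmx (row j P)).
  have Prow : row j P *m adjmx P = delta_mx 0 j.
    by rewrite -row_mul adjmxE (unitarymxP P_unitary) rowE mulmx1.
  have Pcol : P *m adjmx (row j P) = delta_mx j 0.
    by rewrite -[LHS]adjmxK adjmxM adjmxK Prow adjmx_delta.
  rewrite adjmxK A_spectral !mulmxA Prow -mulmxA Pcol.
  by rewrite -rowE -colE !mxE eqxx mulr1n.
under eq_bigr do rewrite adjmxK.
rewrite A_spectral; apply/matrixP => p q; rewrite summxE mul_mx_diag !mxE.
apply: eq_bigr => j _; rewrite !mxE big_ord1 !mxE; ring.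
Qed.

Lemma map2_mx_mul_outer n (A : 'M[C]_n) (u : 'cV[C]_n) :
  map2_mx *%R A (u *m adjmx u) = adjmx (diag_mx (adjmx u)) *m A *m diag_mx (adjmx u).
Proof.
have -> : adjmx (diag_mx (adjmx u)) = diag_mx u^T.
  apply/matrixP => i j; rewrite !mxE rmorphMn /= conjCK eq_sym.
  by have [->|] := eqVneq i j; rewrite ?mulr0n.
rewrite mul_diag_mx mul_mx_diag; apply/matrixP => p q; rewrite !mxE big_ord1 !mxE.
ring.
Qed.

Lemma psd_hadamard n (A B : 'M[C]_n) : psd A -> psd B -> psd (map2_mx *%R A B).
Proof.
move=> psdA /psd_spectral [u [d [d_ge0 ->]]].
have -> : map2_mx *%R A (\sum_j d j *: (u j *m adjmx (u j))) =
          \sum_j d j *: map2_mx *%R A (u j *m adjmx (u j)).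
  apply/matrixP => p q; rewrite !(mxE, summxE) mulr_sumr.
  by apply: eq_bigr => j _; rewrite !mxE mulrCA.
apply: psd_sum => j; apply: psd_scale => //.
by rewrite map2_mx_mul_outer; exact: psd_congr.
Qed.

Lemma mxtrace_outer n (w : 'cV[C]_n) : \tr (w *m adjmx w) = \sum_a w a 0 * (w a 0)^*.
Proof. by apply: eq_bigr => a _; rewrite !mxE big_ord1 !mxE. Qed.

Lemma outer_eq0_on_states n (V : lmodType C) (f : {linear 'M[C]_n -> V}) :
  (forall rho, is_state rho -> f rho = 0) ->
  forall w : 'cV[C]_n, f (w *m adjmx w) = 0.
Proof.
move=> f_states w; have := mxtrace_outer w; set t := \tr _ => tE.
have [t0|t_neq0] := eqVneq t 0.
  suff -> : w = 0 by rewrite mul0mx linear0.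
  have w_sq0 := psumr_eq0P (fun i _ => mul_conjC_ge0 (w i 0)) (etrans (esym tE) t0).
  apply/matrixP => a b; rewrite (ord1 b) mxE.
  by apply/eqP; rewrite -mul_conjC_eq0 w_sq0.
have t_ge0 : 0 <= t by rewrite tE sumr_ge0 // => a _; exact: mul_conjC_ge0.
have : is_state (t^-1 *: (w *m adjmx w)).
  split; last by rewrite mxtraceZ mulVf.
  by apply: psd_scale; [rewrite invr_ge0 | exact: psd_outer].
move/f_states/eqP; rewrite linearZ scaler_eq0 invr_eq0 (negPf t_neq0) /=.
by move/eqP.
Qed.

Lemma outer_polarization n (V : lmodType C) (f : {linear 'M[C]_n -> V}) :
  (forall w : 'cV[C]_n, f (w *m adjmx w) = 0) ->
  forall u v : 'cV[C]_n, f (u *m adjmx v) = 0.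
Proof.
move=> f_outer u v.
have := f_outer (u + 'i *: v); have := f_outer (u + v).
rewrite !adjmxD adjmxZ !mulmxDl !mulmxDr -!scalemxAl -!scalemxAr.
rewrite !linearD !linearZ /= !f_outer !scaler0 !add0r !addr0 conjCi.
move=> /eqP; rewrite addr_eq0 => /eqP ->.
rewrite scaleNr scalerN opprK -mulr2n -scaler_nat => /eqP.
by rewrite !scaler_eq0 pnatr_eq0 (negPf (@neq0Ci C)) /= => /eqP ->; rewrite oppr0.
Qed.

Lemma linear_eq_on_deltas n (V : lmodType C) (f g : 'M[C]_n -> V) :
  linear f -> linear g -> (forall i j, f (delta_mx i j) = g (delta_mx i j)) -> f =1 g.
Proof.
move=> f_lin g_lin fg X; apply/eqP; rewrite -subr_eq0; apply/eqP.
pose lf : {linear _ -> V} := HB.pack f (GRing.isLinear.Build C _ _ _ f f_lin).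
pose lg : {linear _ -> V} := HB.pack g (GRing.isLinear.Build C _ _ _ g g_lin).
change ((lf \- lg) X = 0); rewrite (matrix_sum_delta X) linear_sum big1 // => i _.
by rewrite linear_sum big1 // => j _; rewrite linearZ /= fg subrr scaler0.
Qed.

Lemma linear_eq_on_states n (V : lmodType C) (f g : 'M[C]_n -> V) :
  linear f -> linear g -> (forall rho, is_state rho -> f rho = g rho) -> f =1 g.
Proof.
move=> f_lin g_lin fg; apply: linear_eq_on_deltas => // i j; apply/eqP.
pose lf : {linear _ -> V} := HB.pack f (GRing.isLinear.Build C _ _ _ f f_lin).
pose lg : {linear _ -> V} := HB.pack g (GRing.isLinear.Build C _ _ _ g g_lin).
have states0 rho : is_state rho -> (lf \- lg) rho = 0.
  by move=> /fg /= ->; rewrite subrr.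
have := outer_polarization (outer_eq0_on_states states0) (delta_mx i 0) (delta_mx j 0).
by rewrite adjmx_delta mul_delta_mx /= => /eqP; rewrite subr_eq0.
Qed.

Lemma mxtrace_mul_delta n (A : 'M[C]_n) i j : \tr (A *m delta_mx j i) = A i j.
Proof.
by rewrite -(mul_delta_mx (0 : 'I_1)) mulmxA -colE mxtrace_mulC -rowE trace_mx11 !mxE.
Qed.

Lemma linear_mxtrace_mull n (A : 'M[C]_n) : linear (fun X => \tr (A *m X) : C^o).
Proof. by move=> a X Y; rewrite mulmxDr -scalemxAr mxtraceD mxtraceZ. Qed.

Lemma mxtrace_mul_eq_on_states n (A B : 'M[C]_n) :
  (forall rho, is_state rho -> \tr (A *m rho) = \tr (B *m rho)) -> A = B.
Proof.
move=> AB; apply/matrixP => i j; rewrite -!mxtrace_mul_delta.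
exact: (linear_eq_on_states (linear_mxtrace_mull A) (linear_mxtrace_mull B) AB).
Qed.

Lemma mxtrace_induced_povm (O : finType) n k (R : O -> 'M[C]_n -> 'M[C]_k) x rho :
  linear (R x) -> \tr (induced_povm R x *m rho) = \tr (R x rho).
Proof.
move=> R_lin; move: rho; apply: (linear_eq_on_deltas (V := C^o)
  (f := fun X => \tr (induced_povm R x *m X)) (g := fun X => \tr (R x X))) => [||i j].
- exact: linear_mxtrace_mull.
- by move=> a X Y; rewrite R_lin mxtraceD mxtraceZ.
- by rewrite mxtrace_mul_delta mxE.
Qed.

Definition kronmx k v (P : 'M[C]_k) (Q : 'M[C]_v) : 'M[C]_(k * v) :=
  \matrix_(p, q) (P (tidx p).1 (tidx q).1 * Q (tidx p).2 (tidx q).2).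

Lemma mxtrace_kronmx k v (P : 'M[C]_k) (Q : 'M[C]_v) :
  \tr (kronmx P Q) = \tr P * \tr Q.
Proof.
rewrite /mxtrace sum_mxvec_index mulr_suml; apply: eq_bigr => a _.
by rewrite mulr_sumr; apply: eq_bigr => b _; rewrite mxE tidx_mxvec.
Qed.

Lemma ptrace_snd_kronmx k v (P : 'M[C]_k) (Q : 'M[C]_v) :
  ptrace_snd (kronmx P Q) = \tr Q *: P.
Proof.
apply/matrixP => a b; rewrite !mxE /mxtrace mulr_suml; apply: eq_bigr => c _.
by rewrite mxE !tidx_mxvec mulrC.
Qed.

Lemma ptrace_fst_kronmx k v (P : 'M[C]_k) (Q : 'M[C]_v) :
  ptrace_fst (kronmx P Q) = \tr P *: Q.
Proof.
apply/matrixP => a b; rewrite !mxE /mxtrace mulr_suml; apply: eq_bigr => c _.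
by rewrite mxE !tidx_mxvec.
Qed.

Lemma linear_kronmxl k v (Q : 'M[C]_v) : linear (fun P : 'M[C]_k => kronmx P Q).
Proof. by move=> a P P'; apply/matrixP => p q; rewrite !mxE mulrDl mulrA. Qed.

Lemma mxtrace_ptrace_snd k v (X : 'M[C]_(k * v)) : \tr (ptrace_snd X) = \tr X.
Proof. by rewrite /mxtrace sum_mxvec_index; apply: eq_bigr => a _; rewrite mxE. Qed.

Lemma mxtrace_ptrace_fst k v (X : 'M[C]_(k * v)) : \tr (ptrace_fst X) = \tr X.
Proof.
rewrite /mxtrace sum_mxvec_index exchange_big /=.
by apply: eq_bigr => a _; rewrite mxE.
Qed.

Lemma linear_ptrace_snd k v : linear (@ptrace_snd C k v).
Proof.
move=> a X Y; apply/matrixP => i j; rewrite !mxE mulr_sumr -big_split /=.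
by apply: eq_bigr => c _; rewrite !mxE.
Qed.

Lemma ampl_kronmx m n k v (Phi : 'M[C]_n -> 'M[C]_k) (Q : 'M[C]_v) (X : 'M[C]_(m * n)) :
  ampl (fun Y => kronmx (Phi Y) Q) X =
  map2_mx *%R (mxsub (fun p => mxvec_index (tidx p).1 (tidx (tidx p).2).1)
                     (fun p => mxvec_index (tidx p).1 (tidx (tidx p).2).1) (ampl Phi X))
              (mxsub (fun p => (tidx (tidx p).2).2) (fun p => (tidx (tidx p).2).2) Q).
Proof. by apply/matrixP => p q; rewrite !mxE !tidx_mxvec. Qed.

Lemma ampl_ptrace_snd m n k v (G : 'M[C]_n -> 'M[C]_(k * v)) (X : 'M[C]_(m * n)) :
  ampl (fun Y => ptrace_snd (G Y)) X =
  \sum_c mxsub (fun p => mxvec_index (tidx p).1 (mxvec_index (tidx p).2 c))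
               (fun p => mxvec_index (tidx p).1 (mxvec_index (tidx p).2 c)) (ampl G X).
Proof.
apply/matrixP => p q; rewrite summxE !mxE; apply: eq_bigr => c _.
by rewrite !mxE !tidx_mxvec.
Qed.

Lemma cp_kronmx n k v (Phi : 'M[C]_n -> 'M[C]_k) (Q : 'M[C]_v) :
  completely_positive Phi -> psd Q -> completely_positive (fun X => kronmx (Phi X) Q).
Proof.
move=> Phi_cp psdQ m X psdX; rewrite ampl_kronmx.
by apply: psd_hadamard; apply: psd_mxsub; [exact: Phi_cp | exact: psdQ].
Qed.

Lemma cp_ptrace_snd n k v (G : 'M[C]_n -> 'M[C]_(k * v)) :
  completely_positive G -> completely_positive (fun X => ptrace_snd (G X)).
Proof.
move=> G_cp m X psdX; rewrite ampl_ptrace_snd.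
by apply: psd_sum => c; apply: psd_mxsub; exact: G_cp.
Qed.

Lemma is_instrument_kronmx (O : finType) n k v
    (R : O -> 'M[C]_n -> 'M[C]_k) (sigma : O -> 'M[C]_v) :
  is_instrument R -> (forall o, is_state (sigma o)) ->
  is_instrument (fun o X => kronmx (R o X) (sigma o)).
Proof.
move=> [R_ops R_tp] sigma_state; split.
  move=> o; have [R_lin [R_cp R_tni]] := R_ops o.
  have [psd_sigma tr_sigma] := sigma_state o.
  split; last split.
  - by move=> a X Y; rewrite R_lin linear_kronmxl.
  - exact: cp_kronmx R_cp psd_sigma.
  - by move=> X psdX; rewrite mxtrace_kronmx tr_sigma mulr1; exact: R_tni.
move=> X; rewrite raddf_sum -[RHS]R_tp raddf_sum; apply: eq_bigr => o _ /=.
by rewrite mxtrace_kronmx (sigma_state o).2 mulr1.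
Qed.

Lemma is_instrument_ptrace_snd (O : finType) n k v (G : O -> 'M[C]_n -> 'M[C]_(k * v)) :
  is_instrument G -> is_instrument (fun o X => ptrace_snd (G o X)).
Proof.
move=> [G_ops G_tp]; split.
  move=> o; have [G_lin [G_cp G_tni]] := G_ops o; split; last split.
  - by move=> a X Y; rewrite G_lin linear_ptrace_snd.
  - exact: cp_ptrace_snd G_cp.
  - by move=> X psdX; rewrite mxtrace_ptrace_snd; exact: G_tni.
move=> X; rewrite raddf_sum -[RHS]G_tp raddf_sum; apply: eq_bigr => o _ /=.
exact: mxtrace_ptrace_snd.
Qed.

Lemma compatible_povm_mp_instrument (O L : finType) n k v
    (I : O -> 'M[C]_n -> 'M[C]_k) (B : L -> 'M[C]_n) (xi : L -> 'M[C]_v) :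
  (forall y, is_state (xi y)) ->
  compatible_instrument_povm I B -> compatible_instruments I (mp_instrument B xi).
Proof.
move=> xi_state [R [R_ins [R_I R_B]]].
exists (fun xy X => kronmx (R xy X) (xi xy.2)); split.
  exact: (is_instrument_kronmx R_ins (fun xy => xi_state xy.2)).
move=> rho _; split => [y|x].
  under eq_bigr => x _ do rewrite ptrace_fst_kronmx.
  rewrite /= -scaler_suml /mp_instrument -R_B mulmx_suml raddf_sum; congr (_ *: _).
  apply: eq_bigr => x _ /=; rewrite mxtrace_induced_povm //.
  exact: (R_ins.1 (x, y)).1.
under eq_bigr => y _ do rewrite ptrace_snd_kronmx (xi_state y).2 scale1r.
exact: R_I.
Qed.

Lemma compatible_mp_instrument_povm (O L : finType) n k v
    (I : O -> 'M[C]_n -> 'M[C]_k) (B : L -> 'M[C]_n) (xi : L -> 'M[C]_v) :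
  is_instrument I -> (forall y, is_state (xi y)) ->
  compatible_instruments I (mp_instrument B xi) -> compatible_instrument_povm I B.
Proof.
move=> I_ins xi_state [G [G_ins G_marg]].
have R_ins := is_instrument_ptrace_snd G_ins.
have R_lin xy : linear (fun X => ptrace_snd (G xy X)) := (R_ins.1 xy).1.
exists (fun xy X => ptrace_snd (G xy X)); split => //; split => [x|y].
  apply: linear_eq_on_states; last by move=> rho /G_marg [_ ->].
  - move=> a X Y; rewrite scaler_sumr -big_split.
    by apply: eq_bigr => y _ /=; rewrite R_lin.
  - exact: (I_ins.1 x).1.
apply: mxtrace_mul_eq_on_states => rho rho_state.
rewrite mulmx_suml raddf_sum /=.
under eq_bigr => x _ do rewrite mxtrace_induced_povm // mxtrace_ptrace_snd.
have := congr1 mxtrace ((G_marg rho rho_state).1 y).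
rewrite raddf_sum /mp_instrument mxtraceZ (xi_state y).2 mulr1 => <- /=.
by apply: eq_bigr => x _; rewrite mxtrace_ptrace_fst.
Qed.

End Quantum.

Theorem proposition8 (C : numClosedFieldType) (O L : finType) (n k : nat)
  (I : O -> 'M[C]_n -> 'M[C]_k) (B : L -> 'M[C]_n) :
  is_instrument I -> is_povm B ->
  forall (v : nat) (xi : L -> 'M[C]_v), (forall y, is_state (xi y)) ->
  (compatible_instrument_povm I B <->
   compatible_instruments I (mp_instrument B xi)).
Proof.
move=> I_ins _ v xi xi_state; split.
  exact: compatible_povm_mp_instrument xi_state.
exact: compatible_mp_instrument_povm I_ins xi_state.
Qed.
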